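(* Let $(\mathfrak g,N)$ be a finite-dimensional Nijenhuis perm algebra, $r\in\mathfrak g\otimes\mathfrak g$ symmetric and $S:\mathfrak g\to\mathfrak g$ linear. Then $r$ is a solution of the $S$-admissible perm Yang–Baxter equation in $(\mathfrak g,N)$ if and only if $r^\sharp:\mathfrak g^*\to\mathfrak g$ is a weak $\mathcal O$-operator associated to $(\mathfrak g^*,R^*-L^*,R^* )$ and $S^*$. If moreover $S$ is admissible to $(\mathfrak g,N)$, then $r$ is a solution of the $S$-admissible perm Yang–Baxter equation in $(\mathfrak g,N)$ if and only if $r^\sharp$ is an $\mathcal O$-operator associated to the representation $(\mathfrak g^*,R^*-L^*,R^*,S^* )$ of $(\mathfrak g,N)$.
   Context: Over a field $K$. A (right) perm algebra: bilinear product with $(xy)z=x(yz)=x(zy)$. Nijenhuis operator: $N(x)N(y)+N^2(xy)=N(N(x)y)+N(xN(y))$. The $S$-admissible perm Yang–Baxter equation in $(\mathfrak g,N)$ for $r=\sum r^1\otimes r^2$ (second copy $\bar r$): $r_{13}r_{12}-r_{13}r_{23}+r_{23}r_{12}-r_{12}r_{23}=0$ and $(S\otimes\mathrm{id}-\mathrm{id}\otimes N)(r)=0$, where $r_{13}r_{12}=r^1\bar r^1\otimes\bar r^2\otimes r^2$, $r_{13}r_{23}=r^1\otimes\bar r^1\otimes r^2\bar r^2$, $r_{23}r_{12}=\bar r^1\otimes r^1\bar r^2\otimes r^2$, $r_{12}r_{23}=r^1\otimes r^2\bar r^1\otimes\bar r^2$. $r^\sharp(u^* )=\langle u^*,r^1\rangle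 r^2$. $\langle\xi R^*(a),y\rangle=\langle\xi,ya\rangle$, $\langle L^*(a)\xi,y\rangle=\langle\xi,ay\rangle$; in $(\mathfrak g^*,R^*-L^*,R^* )$ the left action is $(R^*-L^* )(a)\xi=\xi R^*(a)-L^*(a)\xi$ and the right action is $\xi R^*(a)$. A representation $(V,\ell,r)$ of $\mathfrak g$ is written with left action $\ell(x)v$ and right action $v\,r(x)$. Given a Nijenhuis perm algebra $(\mathfrak g,N)$, a representation $(V,\ell,r)$ of $\mathfrak g$ and $\alpha:V\to V$, a weak $\mathcal O$-operator associated to $(V,\ell,r)$ and $\alpha$ is a linear $T:V\to\mathfrak g$ with $T(u)T(v)=T(\ell(T(u))v+u\,r(T(v)))$ for $u,v\in V$ and $N\circ T=T\circ\alpha$; if $(V,\ell,r,\alpha)$ is a representation of $(\mathfrak g,N)$ (i.e. $\ell(N(x))\alpha(v)+\alpha^2(\ell(x)v)=\alpha(\ell(N(x))v)+\alpha(\ell(x)\alpha(v))$ and $\alpha(v)r(N(x))+\alpha^2(v\,r(x))=\alpha(v\,r(N(x)))+\alpha(\alpha(v)r(x))$) it is called an $\mathcal O$-operator associated to $(V,\ell,r,\alpha)$. $S$ is admissible to $(\mathfrak g,N)$ if $S(N(x)y)+xS^2(y)-N(x)S(y)-S(xS(y))=0$ and $S(xN(y))+S^2(x)y-S(x)N(y)-S(S(x)y)=0$. *)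

From HB Require Import structures.
From mathcomp Require Import all_boot all_order all_algebra.
Set Implicit Arguments. Unset Strict Implicit. Unset Printing Implicit Defensive.
Import GRing.Theory.
Local Open Scope ring_scope.

Section Generic.
Variable K : fieldType.
Variables (G V : lmodType K).

Definition perm_algebra (mul : G -> G -> G) : Prop :=
  forall x y z, mul (mul x y) z = mul x (mul y z) /\ mul x (mul y z) = mul x (mul z y).

Definition nijenhuis (mul : G -> G -> G) (N : G -> G) : Prop :=
  forall x y, mul (N x) (N y) + N (N (mul x y)) = N (mul (N x) y) + N (mul x (N y)).

(* representation (V, l, rr) of a perm algebra: left action l x v, right action
   rr v x (written v r(x)); g (+) V is a perm algebra (semidirect product) *)
Definition perm_rep (mul : G -> G -> G) (l : G -> V -> V) (rr : V -> G -> V) : Prop :=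
  (forall x, linear (l x)) /\ (forall x, linear (fun v => rr v x)) /\
  (forall x y v,
    [/\ l (mul x y) v = l x (l y v), l x (l y v) = l x (rr v y),
        rr (l x v) y = l x (rr v y) & l x (rr v y) = l x (l y v)] /\
    rr (rr v x) y = rr v (mul x y) /\ rr v (mul x y) = rr v (mul y x)).

Definition nijenhuis_rep (mul : G -> G -> G) (N : G -> G)
    (l : G -> V -> V) (rr : V -> G -> V) (alpha : V -> V) : Prop :=
  perm_rep mul l rr /\ linear alpha /\
  (forall x v, l (N x) (alpha v) + alpha (alpha (l x v))
               = alpha (l (N x) v) + alpha (l x (alpha v))) /\
  (forall x v, rr (alpha v) (N x) + alpha (alpha (rr v x))
               = alpha (rr v (N x)) + alpha (rr (alpha v) x)).

Definition weak_O_operator (mul : G -> G -> G) (N : G -> G)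
    (l : G -> V -> V) (rr : V -> G -> V) (alpha : V -> V) (T : V -> G) : Prop :=
  (forall u v, mul (T u) (T v) = T (l (T u) v + rr u (T v))) /\
  (forall v, N (T v) = T (alpha v)).

Definition O_operator (mul : G -> G -> G) (N : G -> G)
    (l : G -> V -> V) (rr : V -> G -> V) (alpha : V -> V) (T : V -> G) : Prop :=
  nijenhuis_rep mul N l rr alpha /\ weak_O_operator mul N l rr alpha T.

Definition admissible (mul : G -> G -> G) (N S : G -> G) : Prop :=
  (forall x y, S (mul (N x) y) + mul x (S (S y)) - mul (N x) (S y) - S (mul x (S y)) = 0) /\
  (forall x y, S (mul x (N y)) + mul (S (S x)) y - mul (S x) (N y) - S (mul (S x) y) = 0).

End Generic.

(* ---------- Concrete finite-dimensional setting ----------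
   g = K^n realised as row vectors 'rV[K]_n with standard basis e_i;
   g* is also 'rV[K]_n, with pairing <xi, y> = \sum_i xi_i y_i (dual basis).
   An element r of g (x) g is its coefficient matrix: r = \sum_{i,j} r i j e_i (x) e_j. *)
Section Concrete.
Variables (K : fieldType) (n : nat).
Local Notation g := 'rV[K]_n.

Definition ebasis (i : 'I_n) : g := delta_mx 0 i.

Definition pairing (xi y : g) : K := \sum_(i < n) xi 0 i * y 0 i.

(* xi R^* (a) : <xi R^* (a), y> = <xi, y a> *)
Definition Rstar (mul : g -> g -> g) (a xi : g) : g :=
  \row_i pairing xi (mul (ebasis i) a).
(* L^* (a) xi : <L^* (a) xi, y> = <xi, a y> *)
Definition Lstar (mul : g -> g -> g) (a xi : g) : g :=
  \row_i pairing xi (mul a (ebasis i)).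
Definition dualmap (f : g -> g) (xi : g) : g :=
  \row_i pairing xi (f (ebasis i)).

Definition coadjL (mul : g -> g -> g) (a xi : g) : g := Rstar mul a xi - Lstar mul a xi.
Definition coadjR (mul : g -> g -> g) (xi a : g) : g := Rstar mul a xi.

Definition rsharp (r : 'M[K]_n) (u : g) : g :=
  \sum_(i < n) \sum_(j < n) (r i j * pairing u (ebasis i)) *: ebasis j.

(* coordinates of pure tensors *)
Definition t2 (u v : g) (p q : 'I_n) : K := u 0 p * v 0 q.
Definition t3 (u v w : g) (p q s : 'I_n) : K := u 0 p * v 0 q * w 0 s.

(* r13 r12 - r13 r23 + r23 r12 - r12 r23 = 0, coordinatewise, with
   r = \sum r i j e_i (x) e_j (r^1 = e_i, r^2 = e_j) and
   rbar = \sum r k l e_k (x) e_l (rbar^1 = e_k, rbar^2 = e_l). *)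
Definition pybe_tensor_eq (mul : g -> g -> g) (r : 'M[K]_n) : Prop :=
  forall p q s : 'I_n,
    \sum_(i < n) \sum_(j < n) \sum_(k < n) \sum_(l < n)
      r i j * r k l *
      ( t3 (mul (ebasis i) (ebasis k)) (ebasis l) (ebasis j) p q s
      - t3 (ebasis i) (ebasis k) (mul (ebasis j) (ebasis l)) p q s
      + t3 (ebasis k) (mul (ebasis i) (ebasis l)) (ebasis j) p q s
      - t3 (ebasis i) (mul (ebasis j) (ebasis k)) (ebasis l) p q s ) = 0.

(* (S (x) id - id (x) N)(r) = 0, coordinatewise *)
Definition SN_compat (N S : g -> g) (r : 'M[K]_n) : Prop :=
  forall p q : 'I_n,
    \sum_(i < n) \sum_(j < n)
      r i j * (t2 (S (ebasis i)) (ebasis j) p q - t2 (ebasis i) (N (ebasis j)) p q) = 0.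

Definition S_adm_PYBE (mul : g -> g -> g) (N S : g -> g) (r : 'M[K]_n) : Prop :=
  pybe_tensor_eq mul r /\ SN_compat N S r.

End Concrete.

(* Write T = r^#, so that T u = u r for the coefficient matrix r.  Contracting the Kronecker deltas in
   the (p,q,s)-coordinate of r13 r12 - r13 r23 + r23 r12 - r12 r23 leaves, by
   symmetry of r, exactly the s-coordinate of T(a) - T(e_p) T(e_q), where
   a = (R^* - L^* )(T e_p) e_q + e_p R^*(T e_q); likewise the (p,q)-coordinate
   of (S (x) id - id (x) N) r is that of T(S^* e_p) - N(T e_p).  Both sides of
   the weak O-operator identities are (bi)linear, so they hold iff they hold on
   basis vectors.  For the second part, the coadjoint actions make g^* a
   representation of the perm algebra, and the two admissibility identities of
   S are, after pairing, the two compatibility conditions for S^*. *)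

From HB Require Import structures.
From mathcomp Require Import all_boot all_order all_algebra.
From mathcomp Require Import ring.
Set Implicit Arguments. Unset Strict Implicit. Unset Printing Implicit Defensive.
Import GRing.Theory.
Local Open Scope ring_scope.

Section General.

Lemma sum_delta (I : finType) (V : nmodType) (F : I -> V) i :
  (forall j, j != i -> F j = 0) -> \sum_j F j = F i.
Proof. by move=> F0; rewrite (big_only1 i) // => j /F0. Qed.

Lemma sumrBDB (I : finType) (V : zmodType) (F G H J : I -> V) :
  \sum_i (F i - G i + H i - J i) = \sum_i F i - \sum_i G i + \sum_i H i - \sum_i J i.
Proof. by rewrite sumrB big_split sumrB. Qed.

Variables (R : pzRingType) (U V W : lmodType R).

Lemma linear_comp (f : V -> W) (h : U -> V) : linear f -> linear h -> linear (f \o h).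
Proof. by move=> lf lh a x y; rewrite /= lh lf. Qed.

Lemma linear_add (f h : U -> V) : linear f -> linear h -> linear (f \+ h).
Proof. by move=> lf lh a x y; rewrite /= lf lh scalerDr addrACA. Qed.

End General.
Arguments sum_delta {I V F} i.

Section Basis.
Variables (K : fieldType) (n : nat).
Local Notation g := 'rV[K]_n.
Local Notation e := (ebasis K).
Variable V : lmodType K.
Implicit Types (f h : g -> V) (u v : g) (i j : 'I_n).

Lemma ebasisE i j : e i 0 j = (i == j)%:R.
Proof. by rewrite mxE eqxx eq_sym. Qed.

Lemma ebasis_diag i : e i 0 i = 1.
Proof. by rewrite ebasisE eqxx. Qed.

Lemma ebasis_offdiag i j : i != j -> e i 0 j = 0.
Proof. by rewrite ebasisE => /negPf ->. Qed.

Lemma linear_expand f : linear f -> forall u, f u = \sum_i u 0 i *: f (e i).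
Proof.
move=> lf u; pose fL : {linear g -> V} := HB.pack f (GRing.isLinear.Build _ _ _ _ f lf).
rewrite -[f u]/(fL u) {1}(row_sum_delta u) linear_sum.
by under eq_bigr do rewrite linearZ.
Qed.

Lemma linear_eq_ebasis f h : linear f -> linear h ->
  (forall i, f (e i) = h (e i)) -> f =1 h.
Proof.
move=> lf lh fh u; rewrite (linear_expand lf) (linear_expand lh).
by under eq_bigr do rewrite fh.
Qed.

Lemma bilinear_eq_ebasis (B1 B2 : g -> g -> V) :
  (forall v, linear (B1^~ v)) -> (forall u, linear (B1 u)) ->
  (forall v, linear (B2^~ v)) -> (forall u, linear (B2 u)) ->
  (forall i j, B1 (e i) (e j) = B2 (e i) (e j)) -> forall u v, B1 u v = B2 u v.
Proof.
move=> lB1 rB1 lB2 rB2 B12 u v; apply: (linear_eq_ebasis (lB1 v) (lB2 v)) => i.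
exact: (linear_eq_ebasis (rB1 _) (rB2 _)).
Qed.

End Basis.
Arguments ebasis_offdiag {K n i j}.

Section Pairing.
Variables (K : fieldType) (n : nat).
Local Notation g := 'rV[K]_n.
Local Notation e := (ebasis K).
Implicit Types (f : g -> g) (w x y xi : g) (a : K).

Lemma pairingDl x y w : pairing (x + y) w = pairing x w + pairing y w.
Proof. by rewrite -big_split; apply: eq_bigr => i _; rewrite mxE mulrDl. Qed.

Lemma pairingBl x y w : pairing (x - y) w = pairing x w - pairing y w.
Proof. by rewrite -sumrB; apply: eq_bigr => i _; rewrite !mxE mulrBl. Qed.

Lemma pairingZl a x w : pairing (a *: x) w = a * pairing x w.
Proof. by rewrite mulr_sumr; apply: eq_bigr => i _; rewrite mxE mulrA. Qed.

Lemma pairingDr x y w : pairing w (x + y) = pairing w x + pairing w y.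
Proof. by rewrite -big_split; apply: eq_bigr => i _; rewrite mxE mulrDr. Qed.

Lemma pairingBr x y w : pairing w (x - y) = pairing w x - pairing w y.
Proof. by rewrite -sumrB; apply: eq_bigr => i _; rewrite !mxE mulrBr. Qed.

Lemma pairingZr a x w : pairing w (a *: x) = a * pairing w x.
Proof. by rewrite mulr_sumr; apply: eq_bigr => i _; rewrite mxE mulrCA. Qed.

Lemma pairing0r w : pairing w 0 = 0.
Proof. by rewrite -(subrr 0) pairingBr subrr. Qed.

Lemma pairing_sumr w (I : finType) (F : I -> g) :
  pairing w (\sum_i F i) = \sum_i pairing w (F i).
Proof. exact: (big_morph _ (fun x y => pairingDr x y w) (pairing0r w)). Qed.

Lemma pairing_ebasisr x i : pairing x (e i) = x 0 i.
Proof.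
rewrite /pairing (sum_delta i) => [|j ji]; first by rewrite ebasis_diag mulr1.
by rewrite ebasis_offdiag ?mulr0 // eq_sym.
Qed.

Lemma pairing_ebasisl x i : pairing (e i) x = x 0 i.
Proof.
rewrite /pairing (sum_delta i) => [|j ji]; first by rewrite ebasis_diag mul1r.
by rewrite ebasis_offdiag ?mul0r // eq_sym.
Qed.

Lemma pairing_inj x y : (forall w, pairing x w = pairing y w) -> x = y.
Proof. by move=> xy; apply/rowP => i; rewrite -!pairing_ebasisr xy. Qed.

Lemma pairing_dualmap f (lf : linear f) xi w :
  pairing (dualmap f xi) w = pairing xi (f w).
Proof.
rewrite (linear_expand lf w) pairing_sumr.
by apply: eq_bigr => i _; rewrite mxE pairingZr mulrC.
Qed.

Lemma dualmap_linear f : linear (dualmap f).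
Proof. by move=> a x y; apply/rowP => i; rewrite !mxE pairingDl pairingZl. Qed.

End Pairing.

Section Coadjoint.
Variables (K : fieldType) (n : nat).
Local Notation g := 'rV[K]_n.
Variable mul : g -> g -> g.
Hypothesis mul_linl : forall y, linear (mul^~ y).
Hypothesis mul_linr : forall x, linear (mul x).
Implicit Types (a w x y xi : g).

Lemma pairing_coadjL a xi w :
  pairing (coadjL mul a xi) w = pairing xi (mul w a) - pairing xi (mul a w).
Proof.
by rewrite pairingBl (pairing_dualmap (mul_linl a)) (pairing_dualmap (mul_linr a)).
Qed.

Lemma pairing_coadjR xi a w : pairing (coadjR mul xi a) w = pairing xi (mul w a).
Proof. exact: (pairing_dualmap (mul_linl a)). Qed.

Lemma coadjL_linear a : linear (coadjL mul a).
Proof.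
move=> c x y; apply: pairing_inj => w.
by rewrite !(pairingDl, pairingZl, pairing_coadjL); ring.
Qed.

Lemma coadjL_linear_act xi : linear (coadjL mul ^~ xi).
Proof.
move=> c x y; apply: pairing_inj => w.
rewrite !(pairingDl, pairingZl, pairing_coadjL) mul_linr mul_linl.
by rewrite !(pairingDr, pairingZr); ring.
Qed.

Lemma coadjR_linear a : linear (coadjR mul ^~ a).
Proof.
move=> c x y; apply: pairing_inj => w.
by rewrite !(pairingDl, pairingZl, pairing_coadjR).
Qed.

Lemma coadjR_linear_act xi : linear (coadjR mul xi).
Proof.
move=> c x y; apply: pairing_inj => w.
by rewrite !(pairingDl, pairingZl, pairing_coadjR) mul_linr !(pairingDr, pairingZr).
Qed.

Section PermAlgebra.
Hypothesis mul_perm : perm_algebra mul.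

Lemma mulA x y z : mul (mul x y) z = mul x (mul y z).
Proof. by case: (mul_perm x y z). Qed.

Lemma mul_permr x y z : mul x (mul y z) = mul x (mul z y).
Proof. by case: (mul_perm x y z). Qed.

Lemma coadj_perm_rep : perm_rep mul (coadjL mul) (coadjR mul).
Proof.
split; first exact: coadjL_linear.
split; first exact: coadjR_linear.
move=> x y v; split; [split | split]; apply: pairing_inj => w;
  rewrite !(pairing_coadjL, pairing_coadjR) ?mulA.
- by rewrite [mul y (mul w x)]mul_permr [mul x (mul w y)]mul_permr; ring.
- by rewrite [mul y (mul w x)]mul_permr; ring.
- by rewrite [mul w (mul y x)]mul_permr; ring.
- by rewrite [mul y (mul w x)]mul_permr; ring.
- by rewrite [mul w (mul y x)]mul_permr.
- by rewrite [mul w (mul y x)]mul_permr.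
Qed.

Lemma admissible_coadj_nijenhuis_rep (N S : g -> g) : linear S -> admissible mul N S ->
  nijenhuis_rep mul N (coadjL mul) (coadjR mul) (dualmap S).
Proof.
move=> lS [admL admR].
split; first exact: coadj_perm_rep.
split; first exact: dualmap_linear.
split=> x v; apply: pairing_inj => w;
  rewrite !(pairingDl, pairingBl, pairing_dualmap lS, pairing_coadjL, pairing_coadjR);
  have := congr1 (pairing v) (admR w x); rewrite pairing0r !(pairingBr, pairingDr) => hR.
- have := congr1 (pairing v) (admL x w); rewrite pairing0r !(pairingBr, pairingDr) => hL.
  by apply/eqP; rewrite -subr_eq0 -(subrr 0) -{1}hR -hL; apply/eqP; ring.
- by apply/eqP; rewrite -subr_eq0 -hR; apply/eqP; ring.
Qed.
End PermAlgebra.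

End Coadjoint.

Section YangBaxter.
Variables (K : fieldType) (n : nat).
Local Notation g := 'rV[K]_n.
Local Notation e := (ebasis K).
Variable mul : g -> g -> g.
Hypothesis mul_linl : forall y, linear (mul^~ y).
Hypothesis mul_linr : forall x, linear (mul x).
Variable r : 'M[K]_n.
Hypothesis r_sym : r^T = r.
Local Notation T := (rsharp r).
Local Notation C a b c := (mul (e a) (e b) 0 c).

Lemma r_symE a b : r a b = r b a.
Proof. by rewrite -[in LHS]r_sym mxE. Qed.

Lemma rsharpE u : T u = u *m r.
Proof.
apply/rowP => b; rewrite mxE summxE; apply: eq_bigr => i _.
rewrite summxE (sum_delta b) => [|j jb]; rewrite mxE pairing_ebasisr.
  by rewrite ebasis_diag mulr1 mulrC.
by rewrite (ebasis_offdiag jb) mulr0.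
Qed.

Lemma rsharp_linear : linear T.
Proof. by move=> a x y; rewrite !rsharpE mulmxDl scalemxAl. Qed.

Lemma rsharp_ebasis p : T (e p) = row p r.
Proof. by rewrite rsharpE rowE. Qed.

Lemma mul_coordl x y c : mul x y 0 c = \sum_a x 0 a * mul (e a) y 0 c.
Proof.
by rewrite (linear_expand (mul_linl y)) summxE; under eq_bigr do rewrite mxE.
Qed.

Lemma mul_coordr x y c : mul x y 0 c = \sum_b y 0 b * mul x (e b) 0 c.
Proof.
by rewrite (linear_expand (mul_linr x)) summxE; under eq_bigr do rewrite mxE.
Qed.

(* Each of the four terms carries two basis coordinates, which collapse two of
   the four summations. *)
Lemma pybe_sum_contract p q s :
  \sum_(i < n) \sum_(j < n) \sum_(k < n) \sum_(l < n) r i j * r k l *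
      ( t3 (mul (e i) (e k)) (e l) (e j) p q s
      - t3 (e i) (e k) (mul (e j) (e l)) p q s
      + t3 (e k) (mul (e i) (e l)) (e j) p q s
      - t3 (e i) (mul (e j) (e k)) (e l) p q s ) =
    \sum_(i < n) \sum_(k < n) r i s * r k q * C i k p
  - \sum_(j < n) \sum_(l < n) r p j * r q l * C j l s
  + \sum_(i < n) \sum_(l < n) r i s * r p l * C i l q
  - \sum_(j < n) \sum_(k < n) r p j * r k s * C j k q.
Proof.
rewrite /t3.
under eq_bigr => i _ do under eq_bigr => j _ do under eq_bigr => k _ do
  under eq_bigr => l _ do rewrite mulrBr mulrDr mulrBr.
under eq_bigr => i _ do under eq_bigr => j _ do under eq_bigr => k _ do rewrite sumrBDB.
under eq_bigr => i _ do under eq_bigr => j _ do rewrite sumrBDB.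
under eq_bigr => i _ do rewrite sumrBDB.
rewrite sumrBDB.
congr (_ - _ + _ - _).
- apply: eq_bigr => i _; rewrite (sum_delta s) => [|j js].
    apply: eq_bigr => k _; rewrite (sum_delta q) => [|l lq].
      by rewrite !ebasis_diag; ring.
    by rewrite (ebasis_offdiag lq); ring.
  by rewrite big1 // => k _; rewrite big1 // => l _; rewrite (ebasis_offdiag js); ring.
- rewrite (sum_delta p) => [|i ip].
    apply: eq_bigr => j _; rewrite (sum_delta q) => [|k kq].
      by apply: eq_bigr => l _; rewrite !ebasis_diag; ring.
    by rewrite big1 // => l _; rewrite (ebasis_offdiag kq); ring.
  by rewrite big1 // => j _; rewrite big1 // => k _; rewrite big1 // => l _;
    rewrite (ebasis_offdiag ip); ring.
- apply: eq_bigr => i _; rewrite (sum_delta s) => [|j js].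
    rewrite (sum_delta p) => [|k kp].
      by apply: eq_bigr => l _; rewrite !ebasis_diag; ring.
    by rewrite big1 // => l _; rewrite (ebasis_offdiag kp); ring.
  by rewrite big1 // => k _; rewrite big1 // => l _; rewrite (ebasis_offdiag js); ring.
- rewrite (sum_delta p) => [|i ip].
    apply: eq_bigr => j _; apply: eq_bigr => k _; rewrite (sum_delta s) => [|l ls].
      by rewrite !ebasis_diag; ring.
    by rewrite (ebasis_offdiag ls); ring.
  by rewrite big1 // => j _; rewrite big1 // => k _; rewrite big1 // => l _;
    rewrite (ebasis_offdiag ip); ring.
Qed.

Lemma pybe_coord p q s :
  \sum_(i < n) \sum_(j < n) \sum_(k < n) \sum_(l < n) r i j * r k l *
      ( t3 (mul (e i) (e k)) (e l) (e j) p q s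
      - t3 (e i) (e k) (mul (e j) (e l)) p q s
      + t3 (e k) (mul (e i) (e l)) (e j) p q s
      - t3 (e i) (mul (e j) (e k)) (e l) p q s ) =
  T (coadjL mul (T (e p)) (e q) + coadjR mul (e p) (T (e q))) 0 s
  - mul (T (e p)) (T (e q)) 0 s.
Proof.
rewrite pybe_sum_contract !rsharp_ebasis rsharpE mxE (mul_coordl (row p r)).
under [in RHS]eq_bigr => i _ do rewrite !mxE !pairing_ebasisl
  (mul_coordr (e i) (row p r)) (mul_coordl (row p r)) (mul_coordr (e i) (row q r)).
under [in RHS]eq_bigr do rewrite mulrDl mulrBl.
rewrite big_split sumrB /=.
have -> : \sum_(i < n) \sum_(k < n) r i s * r k q * C i k p
        = \sum_(i < n) (\sum_(b < n) row q r 0 b * C i b p) * r i s.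
  apply: eq_bigr => i _; rewrite mulr_suml; apply: eq_bigr => k _.
  by rewrite mxE [r q k]r_symE; ring.
have -> : \sum_(i < n) \sum_(l < n) r i s * r p l * C i l q
        = \sum_(i < n) (\sum_(b < n) row p r 0 b * C i b q) * r i s.
  apply: eq_bigr => i _; rewrite mulr_suml; apply: eq_bigr => k _.
  by rewrite mxE; ring.
have -> : \sum_(j < n) \sum_(k < n) r p j * r k s * C j k q
        = \sum_(i < n) (\sum_(a < n) row p r 0 a * C a i q) * r i s.
  rewrite exchange_big; apply: eq_bigr => i _; rewrite mulr_suml.
  by apply: eq_bigr => k _; rewrite mxE; ring.
have -> : \sum_(j < n) \sum_(l < n) r p j * r q l * C j l s
        = \sum_(a < n) row p r 0 a * mul (e a) (row q r) 0 s.
  apply: eq_bigr => j _; rewrite mul_coordr mulr_sumr.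
  by apply: eq_bigr => l _; rewrite !mxE; ring.
ring.
Qed.

Lemma SN_coord (N S : g -> g) (lN : linear N) p q :
  \sum_(i < n) \sum_(j < n) r i j * (t2 (S (e i)) (e j) p q - t2 (e i) (N (e j)) p q) =
  T (dualmap S (e p)) 0 q - N (T (e p)) 0 q.
Proof.
under eq_bigr => i _ do under eq_bigr => j _ do rewrite mulrBr.
under eq_bigr => i _ do rewrite sumrB.
rewrite sumrB rsharpE mxE rsharp_ebasis (linear_expand lN) summxE /t2.
congr (_ - _).
- apply: eq_bigr => i _; rewrite (sum_delta q) => [|j jq].
    by rewrite ebasis_diag mxE pairing_ebasisl; ring.
  by rewrite (ebasis_offdiag jq); ring.
- rewrite [LHS](sum_delta p) => [|i ip].
    by apply: eq_bigr => j _; rewrite ebasis_diag !mxE; ring.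
  by rewrite big1 // => j _; rewrite (ebasis_offdiag ip); ring.
Qed.

Lemma pybe_tensor_eqP : pybe_tensor_eq mul r <->
  (forall u v, mul (T u) (T v) = T (coadjL mul (T u) v + coadjR mul u (T v))).
Proof.
split=> [pybe | TO p q s]; last by rewrite pybe_coord TO subrr.
apply: bilinear_eq_ebasis => [v | u | v | u | p q].
- exact: linear_comp (mul_linl _) rsharp_linear.
- exact: linear_comp (mul_linr _) rsharp_linear.
- apply: linear_comp rsharp_linear _.
  exact: linear_add (linear_comp (coadjL_linear_act mul_linl mul_linr _) rsharp_linear)
    (coadjR_linear mul_linl _).
- apply: linear_comp rsharp_linear _.
  exact: linear_add (coadjL_linear mul_linl mul_linr _)
    (linear_comp (coadjR_linear_act mul_linl mul_linr _) rsharp_linear).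
- by apply/rowP => s; apply/esym/eqP; rewrite -subr_eq0 -pybe_coord pybe.
Qed.

Lemma SN_compatP (N S : g -> g) : linear N -> linear S ->
  SN_compat N S r <-> (forall v, N (T v) = T (dualmap S v)).
Proof.
move=> lN lS; split=> [SN | NT p q]; last by rewrite (SN_coord _ lN) NT subrr.
apply: linear_eq_ebasis => [||p]; first exact: linear_comp lN rsharp_linear.
  exact: linear_comp rsharp_linear (dualmap_linear S).
by apply/rowP => q; apply/esym/eqP; rewrite -subr_eq0 -(SN_coord _ lN) SN.
Qed.
End YangBaxter.

Theorem corollary2p38 (K : fieldType) (n : nat)
  (mul : 'rV[K]_n -> 'rV[K]_n -> 'rV[K]_n)
  (mul_linl : forall y, linear (fun x => mul x y))
  (mul_linr : forall x, linear (mul x))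
  (Hperm : perm_algebra mul)
  (N : {linear 'rV[K]_n -> 'rV[K]_n})
  (HN : nijenhuis mul N)
  (r : 'M[K]_n) (Hsym : r^T = r)
  (S : {linear 'rV[K]_n -> 'rV[K]_n}) :
  (S_adm_PYBE mul N S r <->
     weak_O_operator mul N (coadjL mul) (coadjR mul) (dualmap S) (rsharp r)) /\
  (admissible mul N S ->
     (S_adm_PYBE mul N S r <->
        O_operator mul N (coadjL mul) (coadjR mul) (dualmap S) (rsharp r))).
Proof.
have pybeP := pybe_tensor_eqP mul_linl mul_linr Hsym.
have SNP := SN_compatP r (linearPZ N) (linearPZ S).
have weakP : S_adm_PYBE mul N S r <->
    weak_O_operator mul N (coadjL mul) (coadjR mul) (dualmap S) (rsharp r).
  by split=> -[/pybeP ? /SNP ?].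
split=> // adm; split=> [/weakP weak | [_ /weakP //]]; split=> //.
exact: admissible_coadj_nijenhuis_rep mul_linl mul_linr Hperm _ _ (linearPZ S) adm.
Qed.
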